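(* With the notation of the context, assume that every distinct affine local piece of $u^*$ on $\Omega$ appears among the sampled functions $u_1,\dots,u_{N_s}$. Define $\varepsilon=\max_{\bm x\in\Omega}\big(\hat f_{\mathrm{L,c}}(\bm x)-\hat f_{\mathrm{L,d}}(\bm x)\big)$. Then for all $\bm x\in\Omega$, $$-\varepsilon\le \hat f_{\mathrm{L,d}}(\bm x)-u^*(\bm x)\le 0\qquad\text{and}\qquad 0\le \hat f_{\mathrm{L,c}}(\bm x)-u^*(\bm x)\le\varepsilon;$$ in particular $\hat f_{\mathrm{L,d}}\le u^*\le\hat f_{\mathrm{L,c}}$ on $\Omega$. Furthermore, if $\varepsilon=0$, then $\hat f_{\mathrm{L,d}}(\bm x)=\hat f_{\mathrm{L,c}}(\bm x)=u^*(\bm x)$ for all $\bm x\in\Omega$.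
   Context: Let $\Omega\subseteq\mathbb{R}^{n_x}$ be a convex polyhedron (a hyperbox) and $u^*:\Omega\to\mathbb{R}$ a continuous piecewise affine (PWA) function: $\Omega$ is the union of finitely many closed convex polyhedra (local regions) with pairwise disjoint interiors, and on each local region $u^*$ coincides with an affine function (its local piece). (In the paper $u^*$ is the first input of the explicit linear MPC law.) A unique order (UO) region is a closed convex polyhedron contained in a local region on whose interior the order of all distinct local pieces of $u^*$ is constant; $\Omega$ is the union of finitely many UO regions. Sample points $\bm x_1,\dots,\bm x_{N_s}\in\Omega$ are given, each in the interior of a UO region $\Gamma(\bm x_i)$, and $u_i$ denotes the local piece of $u^*$ on $\Gamma(\bm x_i)$. Define $J_{\geq,i}=\{j\in\{1,\dots,N_s\}: u_j(\bm x_i)\ge u_i(\bm x_i)\}$, $J_{\leq,i}=\{j\in\{1,\dots,N_s\}: u_j(\bm x_i)\le u_i(\bm x_i)\}$, $\hat f_{\mathrm{L,d}}(\bm x)=\max_{i=1,\dots,N_s}\min_{j\in J_{\geq,i}}u_j(\bm x)$ and $\hat f_{\mathrm{L,c}}(\bm x)=\min_{i=1,\dots,N_s}\max_{j\in J_{\leq,i}}u_j(\bm x)$. *)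

From HB Require Import structures.
From mathcomp Require Import all_boot all_order all_algebra.
From mathcomp Require Import all_classical all_reals all_analysis.
Set Implicit Arguments. Unset Strict Implicit. Unset Printing Implicit Defensive.
Import Order.TTheory GRing.Theory Num.Theory.
Import numFieldNormedType.Exports.
Local Open Scope classical_set_scope.
Local Open Scope ring_scope.

Section Defs.
Variables (R : realType) (n : nat).

Definition polyhedron (P : set 'rV[R]_n) : Prop :=
  exists (m : nat) (A : 'I_m -> 'rV[R]_n) (b : 'I_m -> R),
    P = [set x | forall k, \sum_(i < n) A k ord0 i * x ord0 i <= b k].

Definition affine (f : 'rV[R]_n -> R) : Prop :=
  exists (a : 'rV[R]_n) (c : R), forall x, f x = \sum_(i < n) a ord0 i * x ord0 i + c.

Definition hyperbox (lo hi : 'rV[R]_n) : set 'rV[R]_n :=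
  [set x | forall i, lo ord0 i <= x ord0 i <= hi ord0 i].

(* J_{>=,i} and J_{<=,i} for sampled functions u and sample points xs *)
Definition f_Ld (N : nat) (u : 'I_N.+1 -> 'rV[R]_n -> R) (xs : 'I_N.+1 -> 'rV[R]_n)
    (x : 'rV[R]_n) : R :=
  let inner i := \big[Num.min/u i x]_(j < N.+1 | u i (xs i) <= u j (xs i)) u j x in
  \big[Num.max/inner ord0]_(i < N.+1) inner i.

Definition f_Lc (N : nat) (u : 'I_N.+1 -> 'rV[R]_n -> R) (xs : 'I_N.+1 -> 'rV[R]_n)
    (x : 'rV[R]_n) : R :=
  let inner i := \big[Num.max/u i x]_(j < N.+1 | u j (xs i) <= u i (xs i)) u j x in
  \big[Num.min/inner ord0]_(i < N.+1) inner i.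

End Defs.

From HB Require Import structures.
From mathcomp Require Import all_boot all_order all_algebra.
From mathcomp Require Import all_classical all_reals all_analysis.
From mathcomp Require Import ring lra.
Import Order.TTheory GRing.Theory Num.Theory.
Import numFieldNormedType.Exports.
Local Open Scope classical_set_scope.
Local Open Scope ring_scope.

(* Everything rests on one fact: for any two points y, x of the domain there is a
   local piece P_k lying above u* at y and below u* at x (and, dually, one lying
   below at y and above at x).  Restricted to the segment from y to x, u* is
   piecewise affine with finitely many closed interval pieces, and the set of
   t in [0, 1] at which some piece lies above u* at 0 and below u* at t is
   swept by a sup argument: when the walk crosses from a piece k into a piece j,
   either j already lies above u* at 0, or the line of k is below that of j at 0
   and not above it at the crossing, hence stays below it afterwards.
   Taking y = x_i, the sampled copy of P_k belongs to J_{>=,i}, so every inner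
   minimum of f_Ld is at most u*(x); dually u* <= f_Lc, and the bounds involving
   epsilon follow from f_Lc - f_Ld <= epsilon. *)

Lemma affine_order_persists (R : realFieldType) (a b a' b' t t' : R) :
  b < b' -> a' * t + b' <= a * t + b -> 0 <= t <= t' -> a' * t' + b' <= a * t' + b.
Proof.
move=> lt_b le_t /andP[t_ge0 le_tt'].
have slope_t_gt0 : 0 < (a - a') * t by lra.
have slope_gt0 : 0 < a - a'.
  rewrite ltNge; apply/negP => slope_le0.
  have : (a - a') * t <= 0 by exact: mulr_le0_ge0.
  lra.
have : (a - a') * t <= (a - a') * t' by rewrite ler_wpM2l // ltW.
lra.
Qed.

Section LinearInequalitySystem.
Variables (R : realType) (m : nat) (c e b : 'I_m -> R).

Lemma closed_linear_system : closed [set t : R | forall q, c q + t * e q <= b q].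
Proof.
have -> : [set t : R | forall q, c q + t * e q <= b q] =
          \bigcap_(q in [set: 'I_m]) [set t | c q + t * e q <= b q].
  by apply/seteqP; split => [t + q _|t + q] => /=; apply.
apply: closed_bigI => q _.
change (closed ((fun t => c q + t * e q) @^-1` [set r | r <= b q])).
apply: preimage_closed; last exact: closed_le.
move=> t _; apply: cvgD; first exact: cvg_cst.
by apply: cvgM; [exact: cvg_id | exact: cvg_cst].
Qed.

Lemma linear_system_is_interval :
  is_interval [set t : R | forall q, c q + t * e q <= b q].
Proof.
move=> t1 t2 /= le_t1 le_t2 t /andP[le_t1t le_tt2] q.
have := le_t1 q; have := le_t2 q.
have [e_ge0|e_lt0] := leP 0 (e q).
  have : t * e q <= t2 * e q by exact: ler_wpM2r.
  lra.
have : t * e q <= t1 * e q by rewrite ler_wnM2r // ltW.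
lra.
Qed.

End LinearInequalitySystem.

Section PiecewiseAffineOnUnitInterval.
Context {R : realType} {K : nat} {I : 'I_K -> set R}.
Hypothesis I_closed : forall k, closed (I k).
Hypothesis I_interval : forall k, is_interval (I k).
Hypothesis I_cover : forall t, 0 <= t <= 1 -> exists k, I k t.

Lemma common_piece_near s : exists2 d : R, 0 < d &
  forall t, 0 <= t <= 1 -> `|s - t| < d -> exists k, I k s /\ I k t.
Proof.
pose U := \bigcup_(k in [set k | ~ I k s]) I k.
have U_closed : closed U.
  by apply: closed_bigcup => [|k _]; [exact: finite_finset | exact: I_closed].
have /nbhs_ballP[d d_gt0 ball_notU] : nbhs s (~` U).
  apply: open_nbhs_nbhs; split; first exact: closed_openC U_closed.
  by case=> k /= notIks.
exists d => // t t01 near_st.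
have [k Ikt] := I_cover t t01.
exists k; split => //; apply: contrapT => notIks.
by apply: (ball_notU t); [rewrite -ball_normE | exists k].
Qed.

Lemma piece_left_of s : 0 < s <= 1 ->
  exists k t, 0 <= t < s /\ forall r, t <= r <= s -> I k r.
Proof.
move=> /andP[s_gt0 s_le1]; have [d d_gt0 near_s] := common_piece_near s.
pose D := Num.min d s.
have D_gt0 : 0 < D by rewrite lt_min d_gt0.
have D_le_d : D <= d by rewrite ge_min lexx.
have D_le_s : D <= s by rewrite ge_min lexx orbT.
have [k [Iks Ikt]] : exists k, I k s /\ I k (s - D / 2).
  apply: near_s; first by apply/andP; split; lra.
  have -> : s - (s - D / 2) = D / 2 by ring.
  by rewrite ger0_norm; lra.
exists k, (s - D / 2); split; first by apply/andP; split; lra.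
exact: I_interval Ikt Iks.
Qed.

Lemma piece_right_of s : 0 <= s < 1 ->
  exists k t, s < t <= 1 /\ forall r, s <= r <= t -> I k r.
Proof.
move=> /andP[s_ge0 s_lt1]; have [d d_gt0 near_s] := common_piece_near s.
pose D := Num.min d (1 - s).
have D_gt0 : 0 < D by rewrite lt_min d_gt0 subr_gt0.
have D_le_d : D <= d by rewrite ge_min lexx.
have D_le_1s : D <= 1 - s by rewrite ge_min lexx orbT.
have [k [Iks Ikt]] : exists k, I k s /\ I k (s + D / 2).
  apply: near_s; first by apply/andP; split; lra.
  have -> : s - (s + D / 2) = - (D / 2) by ring.
  by rewrite normrN ger0_norm; lra.
exists k, (s + D / 2); split; first by apply/andP; split; lra.
exact: I_interval Iks Ikt.
Qed.

Section SupportingPiece.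
Variables (l : 'I_K -> R -> R) (phi : R -> R).
Hypothesis l_affine : forall k, exists a b, forall t, l k t = a * t + b.
Hypothesis phi_piece : forall k t, 0 <= t <= 1 -> I k t -> phi t = l k t.

Let supported t := exists k, phi 0 <= l k 0 /\ l k t <= phi t.

Lemma supported0 : supported 0.
Proof.
have [k Ik0] := I_cover 0 ltac:(by rewrite lexx ler01).
by exists k; rewrite (phi_piece k 0) ?lexx ?ler01.
Qed.

Lemma supported_along_piece j t t' : 0 <= t <= t' -> t' <= 1 ->
  I j t -> I j t' -> supported t -> supported t'.
Proof.
move=> /andP[t_ge0 le_tt'] t'_le1 Ijt Ijt' [k [phi0_le lkt_le]].
have phi_t' : phi t' = l j t' by rewrite (phi_piece j t') // t'_le1 (le_trans t_ge0).
have [phi0_le_lj0|lj0_lt] := lerP (phi 0) (l j 0).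
  by exists j; rewrite phi_t'.
exists k; split => //; rewrite phi_t'.
have phi_t : phi t = l j t by rewrite (phi_piece j t) // t_ge0 (le_trans le_tt').
have [aj [bj lj]] := l_affine j; have [ak [bk lk]] := l_affine k.
move: lj0_lt phi0_le lkt_le; rewrite phi_t !lj !lk !mulr0 !add0r => lj0_lt phi0_le lkt_le.
apply: affine_order_persists lkt_le _; first lra.
by rewrite t_ge0 le_tt'.
Qed.

Lemma supported_left_closed s : 0 < s <= 1 ->
  (forall r, 0 <= r < s -> supported r) -> supported s.
Proof.
move=> s01 below_s; have [j [t [/andP[t_ge0 lt_ts] Ij]]] := piece_left_of _ s01.
apply: (supported_along_piece j t).
- by rewrite t_ge0 ltW.
- by case/andP: s01.
- by apply: Ij; rewrite lexx ltW.
- by apply: Ij; rewrite lexx ltW.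
- by apply: below_s; rewrite t_ge0.
Qed.

Lemma supported_right_open s : 0 <= s < 1 ->
  (forall r, 0 <= r <= s -> supported r) ->
  exists2 t, s < t <= 1 & forall r, 0 <= r <= t -> supported r.
Proof.
move=> s01 upto_s; have [j [t [t_range Ij]]] := piece_right_of _ s01.
case/andP: s01 t_range => s_ge0 _ /andP[lt_st t_le1].
exists t => [|r /andP[r_ge0 le_rt]]; first by rewrite lt_st.
have [le_rs|lt_sr] := leP r s; first by apply: upto_s; rewrite r_ge0.
apply: (supported_along_piece j s).
- by rewrite s_ge0 ltW.
- exact: le_trans t_le1.
- by apply: Ij; rewrite lexx ltW.
- by apply: Ij; rewrite ltW.
- by apply: upto_s; rewrite s_ge0 lexx.
Qed.

Lemma supported1 : exists k, phi 0 <= l k 0 /\ l k 1 <= phi 1.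
Proof.
pose S := [set t | 0 <= t <= 1 /\ forall r, 0 <= r <= t -> supported r].
have S0 : S 0.
  split=> [|r /andP[r_ge0 r_le0]]; first by rewrite lexx ler01.
  have -> : r = 0 by apply/le_anti; rewrite r_le0 r_ge0.
  exact: supported0.
have S_sup : has_sup S by split; [exists 0 | exists 1 => t [/andP[]]].
have s_ge0 : 0 <= sup S by exact: sup_upper_bound.
have s_le1 : sup S <= 1 by apply: ge_sup; [exists 0 | move=> t [/andP[]]].
have below_s r : 0 <= r < sup S -> supported r.
  move=> /andP[r_ge0 lt_rs].
  have gap_gt0 : 0 < sup S - r by rewrite subr_gt0.
  have [t [_ upto_t]] := sup_adherent gap_gt0 S_sup.
  by rewrite subKr => lt_rt; apply: upto_t; rewrite r_ge0 ltW.
have upto_s r : 0 <= r <= sup S -> supported r.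
  move=> /andP[r_ge0]; rewrite le_eqVlt => /predU1P[->|lt_rs]; last first.
    by apply: below_s; rewrite r_ge0.
  have [s0|s_neq0] := eqVneq (sup S) 0; first by rewrite s0; exact: supported0.
  by apply: supported_left_closed => //; rewrite lt_def s_neq0 s_ge0.
have [lt_s1|s_ge1] := ltP (sup S) 1.
  have [t /andP[lt_st t_le1] upto_t] :=
    supported_right_open (sup S) ltac:(by rewrite s_ge0 lt_s1) upto_s.
  have : t <= sup S.
    by apply: sup_upper_bound => //; split => //; rewrite t_le1 andbT (le_trans s_ge0) // ltW.
  by rewrite leNgt lt_st.
have s1 : sup S = 1 by apply: le_anti; rewrite s_le1 s_ge1.
by apply: upto_s; rewrite s1 ler01 lexx.
Qed.

End SupportingPiece.

Lemma supporting_pieces (l : 'I_K -> R -> R) (phi : R -> R) :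
  (forall k, exists a b, forall t, l k t = a * t + b) ->
  (forall k t, 0 <= t <= 1 -> I k t -> phi t = l k t) ->
  (exists k, phi 0 <= l k 0 /\ l k 1 <= phi 1) /\
  (exists k, l k 0 <= phi 0 /\ phi 1 <= l k 1).
Proof.
move=> l_affine phi_piece; split; first exact: supported1.
have [|k t t01 Ikt|k] := supported1 (fun k t => - l k t) (fun t => - phi t).
- move=> k; have [a [b lk]] := l_affine k.
  by exists (- a), (- b) => t; rewrite lk; ring.
- by rewrite (phi_piece k t).
- by rewrite !lerN2 => -[]; exists k.
Qed.

End PiecewiseAffineOnUnitInterval.

Section Lines.
Context {R : realType} {n : nat}.

Lemma dot_on_line (a y x : 'rV[R]_n) t :
  \sum_(i < n) a ord0 i * (y + t *: (x - y)) ord0 i =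
  \sum_(i < n) a ord0 i * y ord0 i + t * \sum_(i < n) a ord0 i * (x ord0 i - y ord0 i).
Proof. by rewrite mulr_sumr -big_split; apply: eq_bigr => i _ /=; rewrite !mxE; ring. Qed.

Lemma polyhedron_on_line (y x : 'rV[R]_n) {Q : set 'rV[R]_n} : polyhedron Q ->
  exists m (c e b : 'I_m -> R),
    [set t | Q (y + t *: (x - y))] = [set t | forall q, c q + t * e q <= b q].
Proof.
move=> [m [A [b ->]]].
exists m, (fun q => \sum_(i < n) A q ord0 i * y ord0 i),
  (fun q => \sum_(i < n) A q ord0 i * (x ord0 i - y ord0 i)), b.
by apply/seteqP; split => t /= Qt q; [rewrite -dot_on_line | rewrite dot_on_line].
Qed.

Lemma affine_on_line (g : 'rV[R]_n -> R) (y x : 'rV[R]_n) : affine g ->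
  exists a b, forall t, g (y + t *: (x - y)) = a * t + b.
Proof.
move=> [a [c ga]].
exists (\sum_(i < n) a ord0 i * (x ord0 i - y ord0 i)),
  (\sum_(i < n) a ord0 i * y ord0 i + c) => t.
by rewrite ga dot_on_line; ring.
Qed.

Lemma hyperbox_convex (lo hi y x : 'rV[R]_n) t :
  hyperbox lo hi y -> hyperbox lo hi x -> 0 <= t <= 1 ->
  hyperbox lo hi (y + t *: (x - y)).
Proof.
move=> box_y box_x /andP[t_ge0 t_le1] i; rewrite !mxE.
have /andP[lo_y y_hi] := box_y i; have /andP[lo_x x_hi] := box_x i.
have : 0 <= (1 - t) * (y ord0 i - lo ord0 i) by apply: mulr_ge0; lra.
have : 0 <= t * (x ord0 i - lo ord0 i) by apply: mulr_ge0; lra.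
have : 0 <= (1 - t) * (hi ord0 i - y ord0 i) by apply: mulr_ge0; lra.
have : 0 <= t * (hi ord0 i - x ord0 i) by apply: mulr_ge0; lra.
by move=> *; apply/andP; split; nra.
Qed.

End Lines.

Section PiecewiseAffineOnConvexSet.
Context {R : realType} {n K : nat} {Omega : set 'rV[R]_n}.
Context {Reg : 'I_K -> set 'rV[R]_n} {P : 'I_K -> 'rV[R]_n -> R} {f : 'rV[R]_n -> R}.
Hypothesis Omega_convex : forall y x t, Omega y -> Omega x -> 0 <= t <= 1 ->
  Omega (y + t *: (x - y)).
Hypothesis Reg_polyhedron : forall k, polyhedron (Reg k).
Hypothesis Omega_cover : forall x, Omega x -> exists k, Reg k x.
Hypothesis P_affine : forall k, affine (P k).
Hypothesis f_piece : forall k x, Omega x -> Reg k x -> f x = P k x.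

Lemma supporting_pieces_on_segment y x : Omega y -> Omega x ->
  (exists k, f y <= P k y /\ P k x <= f x) /\
  (exists k, P k y <= f y /\ f x <= P k x).
Proof.
move=> Omega_y Omega_x; pose seg t := y + t *: (x - y).
have seg_in t : 0 <= t <= 1 -> Omega (seg t) by exact: Omega_convex.
pose I k := [set t | Reg k (seg t)].
have I_closed k : closed (I k).
  rewrite /I /seg.
  by have [m [c [e [b ->]]]] := polyhedron_on_line y x (Reg_polyhedron k);
     exact: closed_linear_system.
have I_interval k : is_interval (I k).
  rewrite /I /seg.
  by have [m [c [e [b ->]]]] := polyhedron_on_line y x (Reg_polyhedron k);
     exact: linear_system_is_interval.
have I_cover t : 0 <= t <= 1 -> exists k, I k t.
  by move=> t01; exact: Omega_cover (seg_in t t01).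
have [] := supporting_pieces I_closed I_interval I_cover
  (fun k t => P k (seg t)) (fun t => f (seg t)).
- by move=> k; exact: affine_on_line.
- by move=> k t t01 Ikt; exact: f_piece (seg_in t t01) Ikt.
have -> : seg 0 = y by rewrite /seg scale0r addr0.
have -> : seg 1 = x by rewrite /seg scale1r addrC subrK.
by [].
Qed.

End PiecewiseAffineOnConvexSet.

Section SampledEnvelopes.
Variables (R : realType) (n N : nat).
Variables (u : 'I_N.+1 -> 'rV[R]_n -> R) (xs : 'I_N.+1 -> 'rV[R]_n).

Lemma f_Ld_le x v :
  (forall i, exists2 j, u i (xs i) <= u j (xs i) & u j x <= v) -> f_Ld u xs x <= v.
Proof.
move=> lower.
have inner_le i : \big[Num.min/u i x]_(j < N.+1 | u i (xs i) <= u j (xs i)) u j x <= v.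
  by have [j Jj ujx] := lower i; exact: (bigmin_inf j).
by rewrite /f_Ld; apply: bigmax_le => [|i _]; exact: inner_le.
Qed.

Lemma le_f_Lc x v :
  (forall i, exists2 j, u j (xs i) <= u i (xs i) & v <= u j x) -> v <= f_Lc u xs x.
Proof.
move=> upper.
have le_inner i : v <= \big[Num.max/u i x]_(j < N.+1 | u j (xs i) <= u i (xs i)) u j x.
  by have [j Jj ujx] := upper i; exact: (bigmax_sup j).
by rewrite /f_Lc; apply: le_bigmin => [|i _]; exact: le_inner.
Qed.

End SampledEnvelopes.

Theorem theorem1 (R : realType) (n : nat) (lo hi : 'rV[R]_n)
  (ustar : 'rV[R]_n -> R)
  (* local regions and local pieces *)
  (K : nat) (Reg : 'I_K -> set 'rV[R]_n) (P : 'I_K -> 'rV[R]_n -> R)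
  (* unique order regions *)
  (M : nat) (G : 'I_M -> set 'rV[R]_n)
  (* samples (N_s = N.+1), UO region index of each sample, sampled pieces *)
  (N : nat) (xs : 'I_N.+1 -> 'rV[R]_n) (gam : 'I_N.+1 -> 'I_M)
  (u : 'I_N.+1 -> 'rV[R]_n -> R)
  (eps : R) :
  (* Omega is a hyperbox *)
  (forall i, lo ord0 i <= hi ord0 i) ->
  (* u* is continuous PWA on Omega *)
  {within hyperbox lo hi, continuous ustar} ->
  (forall k, polyhedron (Reg k)) ->
  hyperbox lo hi = \bigcup_(k in [set: 'I_K]) Reg k ->
  (forall k1 k2, k1 != k2 -> interior (Reg k1) `&` interior (Reg k2) = set0) ->
  (forall k, affine (P k)) ->
  (forall k x, Reg k x -> ustar x = P k x) ->
  (* UO regions *)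
  (forall m, polyhedron (G m)) ->
  (forall m, exists k, G m `<=` Reg k) ->
  (forall m k1 k2 x y, interior (G m) x -> interior (G m) y ->
     Num.sg (P k1 x - P k2 x) = Num.sg (P k1 y - P k2 y)) ->
  hyperbox lo hi = \bigcup_(m in [set: 'I_M]) G m ->
  (* samples *)
  (forall i, interior (G (gam i)) (xs i)) ->
  (forall i, exists k, G (gam i) `<=` Reg k /\ u i = P k) ->
  (* every distinct local piece is sampled *)
  (forall k, exists i, u i = P k) ->
  (* eps is the maximum over Omega of f_Lc - f_Ld *)
  (exists2 x, hyperbox lo hi x & eps = f_Lc u xs x - f_Ld u xs x) ->
  (forall x, hyperbox lo hi x -> f_Lc u xs x - f_Ld u xs x <= eps) ->
  (forall x, hyperbox lo hi x ->
     [/\ - eps <= f_Ld u xs x - ustar x, f_Ld u xs x - ustar x <= 0,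
         0 <= f_Lc u xs x - ustar x & f_Lc u xs x - ustar x <= eps])
  /\ (eps = 0 -> forall x, hyperbox lo hi x ->
        f_Ld u xs x = ustar x /\ f_Lc u xs x = ustar x).
Proof.
move=> _ _ Reg_poly box_Reg _ P_aff u_piece _ _ _ box_G xs_int xs_piece sampled _ eps_max.
have xs_G i : G (gam i) (xs i) by exact: interior_subset.
have xs_box i : hyperbox lo hi (xs i) by rewrite box_G; exists (gam i).
have u_xs i : u i (xs i) = ustar (xs i).
  by have [k [Gk ->]] := xs_piece i; rewrite (u_piece k) //; exact: Gk.
have box_cover x : hyperbox lo hi x -> exists k, Reg k x.
  by rewrite box_Reg => -[k _ Rk]; exists k.
have pieces := supporting_pieces_on_segment (@hyperbox_convex R n lo hi) Reg_poly
  box_cover P_aff (fun k x _ => u_piece k x).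
have below x : hyperbox lo hi x -> f_Ld u xs x <= ustar x.
  move=> box_x; apply: f_Ld_le => i.
  have [[k [above_xs below_x]] _] := pieces _ _ (xs_box i) box_x.
  by have [j ujk] := sampled k; exists j; rewrite ujk ?u_xs.
have above x : hyperbox lo hi x -> ustar x <= f_Lc u xs x.
  move=> box_x; apply: le_f_Lc => i.
  have [_ [k [below_xs above_x]]] := pieces _ _ (xs_box i) box_x.
  by have [j ujk] := sampled k; exists j; rewrite ujk ?u_xs.
split=> [x box_x | eps0 x box_x];
  have := eps_max x box_x; have := below x box_x; have := above x box_x.
- by move=> *; split; lra.
- by rewrite eps0 => *; split; lra.
Qed.
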